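(* Points $A,B,C,D\in I^3$ are consecutive vertices of a convex quadrilateral not lying in an isotropic plane if and only if the planes $A^*,B^*,C^*,D^*$ contain consecutive flat angles of an admissible convex 4-hedral angle.
   Context: $I^3$ is $\mathbb{R}^3$ with coordinates $(x,y,z)$; a line or plane is isotropic if parallel to the $z$-axis. Metric duality: a point $P=(P^1,P^2,P^3)$ corresponds to the plane $P^*\colon z=P^1x+P^2y-P^3$. Given a convex quadrilateral in a plane and a point $O$ not in the plane, the union of all rays from $O$ meeting the quadrilateral is a convex 4-hedral angle with vertex $O$; the union of rays from $O$ meeting one side of the quadrilateral is a flat angle; the four flat angles are consecutive in the order of the sides. The 4-hedral angle is admissible if the isotropic line through $O$ meets its interior. *)

From HB Require Import structures.
From mathcomp Require Import all_boot all_order all_algebra.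
From mathcomp Require Import reals.
Set Implicit Arguments. Unset Strict Implicit. Unset Printing Implicit Defensive.
Import Order.TTheory GRing.Theory Num.Theory.
Local Open Scope ring_scope.

(* Points of I^3 = R^3 are row vectors 'rV[R]_3; coordinates
   x = p 0 0, y = p 0 1, z = p 0 2. *)
Section Defs.
Variable R : realType.
Notation pt := 'rV[R]_3.

Definition xc (p : pt) : R := p 0 0.
Definition yc (p : pt) : R := p 0 1.
Definition zc (p : pt) : R := p 0 2%:R.

Definition dotp (u v : pt) : R := \sum_(i < 3) u 0 i * v 0 i.

Definition dual_plane (P : pt) : pt -> Prop :=
  fun X => zc X = xc P * xc X + yc P * yc X - zc P.

Definition collinear3 (P Q S : pt) : Prop :=
  exists (a d : pt), d != 0 /\
    (exists t : R, P = a + t *: d) /\ (exists t : R, Q = a + t *: d) /\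
    (exists t : R, S = a + t *: d).

(* A, B, C, D are consecutive vertices of a (non-degenerate) convex
   quadrilateral: the vertices are not all collinear and the diagonals
   AC and BD cross at a point interior to both. *)
Definition convex_quad (A B C D : pt) : Prop :=
  ~ collinear3 A B C /\
  exists s t : R, 0 < s < 1 /\ 0 < t < 1 /\
    A + s *: (C - A) = B + t *: (D - B).

(* the four points lie in an isotropic (vertical) plane a x + b y = c *)
Definition in_isotropic_plane (A B C D : pt) : Prop :=
  exists a b c : R, (a != 0 \/ b != 0) /\
    (forall X, X \in [:: A; B; C; D] -> a * xc X + b * yc X = c).

Definition off_plane (O P1 P2 P3 P4 : pt) : Prop :=
  exists (n : pt) (c : R), n != 0 /\
    dotp n P1 = c /\ dotp n P2 = c /\ dotp n P3 = c /\ dotp n P4 = c /\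
    dotp n O != c.

Definition quad_region (P1 P2 P3 P4 : pt) : pt -> Prop :=
  fun X => exists l1 l2 l3 l4 : R,
    0 <= l1 /\ 0 <= l2 /\ 0 <= l3 /\ 0 <= l4 /\ l1 + l2 + l3 + l4 = 1 /\
    X = l1 *: P1 + l2 *: P2 + l3 *: P3 + l4 *: P4.

Definition rays_from (O : pt) (S : pt -> Prop) : pt -> Prop :=
  fun Y => exists (t : R) (X : pt), 0 <= t /\ S X /\ Y = O + t *: (X - O).

Definition segment (P Q : pt) : pt -> Prop :=
  fun X => exists u : R, 0 <= u <= 1 /\ X = P + u *: (Q - P).

Definition hedral_angle (O P1 P2 P3 P4 : pt) : pt -> Prop :=
  rays_from O (quad_region P1 P2 P3 P4).

Definition flat_angle (O P Q : pt) : pt -> Prop := rays_from O (segment P Q).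

Definition is_convex_4hedral (O P1 P2 P3 P4 : pt) : Prop :=
  convex_quad P1 P2 P3 P4 /\ off_plane O P1 P2 P3 P4.

Definition interior3 (S : pt -> Prop) : pt -> Prop :=
  fun X => exists e : R, 0 < e /\
    forall Y : pt, dotp (Y - X) (Y - X) < e -> S Y.

(* admissible: the isotropic line through O meets the interior *)
Definition admissible (O P1 P2 P3 P4 : pt) : Prop :=
  exists Y : pt, xc Y = xc O /\ yc Y = yc O /\
    interior3 (hedral_angle O P1 P2 P3 P4) Y.

Definition subset3 (S T : pt -> Prop) : Prop := forall X, S X -> T X.

End Defs.

From HB Require Import structures.
From mathcomp Require Import all_boot all_order all_algebra.
From mathcomp Require Import reals.
From mathcomp Require Import ring lra.
Import Order.TTheory GRing.Theory Num.Theory.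
Set Implicit Arguments. Unset Strict Implicit. Unset Printing Implicit Defensive.
Local Open Scope ring_scope.

(* Put n_X := dual_normal X = (x_X, y_X, -1).  Then X^* = {Y | n_X . Y = z_X}, and O
   lies on X^* iff X lies on O^*.  So the four dual planes pass through one point O iff
   A, B, C, D lie in the non-isotropic plane O^*, and the faces X^* and Y^* of the angle
   meet along the line through O in direction n_X x n_Y.  Both convexity conditions are
   sign conditions on 3x3 determinants: four vectors on an affine plane missing the
   origin have crossing diagonals iff their four cyclic determinants share a sign.  The
   identity det(a x b, b x c, c x d) = det(a, b, c) det(b, c, d) transports these signs
   between the edge directions of the angle and the lifts (x, y, 1) of A, B, C, D.
   Admissibility (the isotropic line through O enters the angle) is what gives the four
   edges consistent orientations with respect to the z-axis. *)

Section SignRules.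
Variable R : realDomainType.

Lemma mul_same_sign_gt0 (d a b : R) : 0 < d * a -> 0 < d * b -> 0 < a * b.
Proof.
move=> da db; have d0 : d != 0 by apply: contraTneq da => ->; rewrite mul0r ltxx.
have dd : 0 < d * d by rewrite -expr2 exprn_even_gt0.
rewrite -(pmulr_rgt0 _ dd) (_ : d * d * (a * b) = (d * a) * (d * b)).
  exact: mulr_gt0.
by ring.
Qed.

Lemma sign_of_prod3 (r o k1 k2 k3 : R) :
  0 < r * k1 -> 0 < r * k2 -> 0 < r * k3 -> 0 < o * (k1 * k2 * k3) -> 0 < r * o.
Proof.
move=> rk1 rk2 rk3 ok; have r0 : r != 0 by apply: contraTneq rk1 => ->; rewrite mul0r ltxx.
have rr : 0 < r * r by rewrite -expr2 exprn_even_gt0.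
have rk : 0 < r * k1 * (r * k2) * (r * k3) by do 2 apply: mulr_gt0 => //.
rewrite -(pmulr_lgt0 _ rk).
rewrite (_ : r * o * _ = r * r * (r * r) * (o * (k1 * k2 * k3))).
  by do 2 apply: mulr_gt0 => //.
by ring.
Qed.

End SignRules.

Lemma ratio_in_01 (R : realFieldType) (k a b : R) :
  0 < k * a -> 0 < k * b -> 0 < b / (a + b) < 1.
Proof.
move=> ka kb; have k0 : k != 0 by apply: contraTneq ka => ->; rewrite mul0r ltxx.
have kab : 0 < k * a + k * b by rewrite addr_gt0.
have ab0 : a + b != 0 by apply: contraTneq kab => ab0; rewrite -mulrDr ab0 mulr0 ltxx.
rewrite (_ : b / (a + b) = k * b / (k * a + k * b)).
  by rewrite divr_gt0 //= ltr_pdivrMr // mul1r ltrDr.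
by rewrite -mulrDr; field; rewrite ab0.
Qed.

Section Space.
Variable R : realType.
Notation pt := 'rV[R]_3.
Implicit Types (u v w n h O P Q S X Y A B C D : pt) (k s t c : R).

Lemma row3_eq u v : xc u = xc v -> yc u = yc v -> zc u = zc v -> u = v.
Proof.
rewrite /xc /yc /zc => ex ey ez; apply/rowP => -[[|[|[|//]]] lt3].
- by rewrite (_ : Ordinal lt3 = 0) //; apply/val_inj.
- by rewrite (_ : Ordinal lt3 = 1) //; apply/val_inj.
- by rewrite (_ : Ordinal lt3 = 2%:R) //; apply/val_inj.
Qed.

Lemma coord_eq u v : u = v -> [/\ xc u = xc v, yc u = yc v & zc u = zc v].
Proof. by move->. Qed.

Definition row3 (x y z : R) : pt := \row_(i < 3) [:: x; y; z]`_i.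

Lemma xc_row3 x y z : xc (row3 x y z) = x. Proof. by rewrite /xc mxE. Qed.
Lemma yc_row3 x y z : yc (row3 x y z) = y. Proof. by rewrite /yc mxE. Qed.
Lemma zc_row3 x y z : zc (row3 x y z) = z. Proof. by rewrite /zc mxE. Qed.
Lemma xcD u v : xc (u + v) = xc u + xc v. Proof. by rewrite /xc mxE. Qed.
Lemma ycD u v : yc (u + v) = yc u + yc v. Proof. by rewrite /yc mxE. Qed.
Lemma zcD u v : zc (u + v) = zc u + zc v. Proof. by rewrite /zc mxE. Qed.
Lemma xcN u : xc (- u) = - xc u. Proof. by rewrite /xc mxE. Qed.
Lemma ycN u : yc (- u) = - yc u. Proof. by rewrite /yc mxE. Qed.
Lemma zcN u : zc (- u) = - zc u. Proof. by rewrite /zc mxE. Qed.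
Lemma xcZ k u : xc (k *: u) = k * xc u. Proof. by rewrite /xc mxE. Qed.
Lemma ycZ k u : yc (k *: u) = k * yc u. Proof. by rewrite /yc mxE. Qed.
Lemma zcZ k u : zc (k *: u) = k * zc u. Proof. by rewrite /zc mxE. Qed.
Lemma xc0 : xc (0 : pt) = 0. Proof. by rewrite /xc mxE. Qed.
Lemma yc0 : yc (0 : pt) = 0. Proof. by rewrite /yc mxE. Qed.
Lemma zc0 : zc (0 : pt) = 0. Proof. by rewrite /zc mxE. Qed.

Definition coordE := (xcD, ycD, zcD, xcN, ycN, zcN, xcZ, ycZ, zcZ, xc0, yc0, zc0,
  xc_row3, yc_row3, zc_row3).

Lemma dotpE u v : dotp u v = xc u * xc v + yc u * yc v + zc u * zc v.
Proof.
rewrite /dotp !big_ord_recr big_ord0 /= add0r /xc /yc /zc.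
by do !congr (_ + _); congr (_ * _); congr (_ _ _); apply/val_inj.
Qed.

Lemma dotpDr u v w : dotp u (v + w) = dotp u v + dotp u w.
Proof. by rewrite !dotpE !coordE; ring. Qed.

Lemma dotpBr u v w : dotp u (v - w) = dotp u v - dotp u w.
Proof. by rewrite !dotpE !coordE; ring. Qed.

Lemma dotpZr k u v : dotp u (k *: v) = k * dotp u v.
Proof. by rewrite !dotpE !coordE; ring. Qed.

Lemma dotpZl k u v : dotp (k *: u) v = k * dotp u v.
Proof. by rewrite !dotpE !coordE; ring. Qed.

Lemma dotp_ge0 v : 0 <= dotp v v.
Proof. by rewrite dotpE -!expr2 !addr_ge0 ?sqr_ge0. Qed.

Lemma dotp_gt0 v : v != 0 -> 0 < dotp v v.
Proof.
move=> v0; rewrite lt_def dotp_ge0 andbT; apply: contra v0.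
rewrite dotpE -!expr2 paddr_eq0 ?addr_ge0 ?sqr_ge0 // paddr_eq0 ?sqr_ge0 //.
rewrite !sqrf_eq0 => /andP[/andP[/eqP x0 /eqP y0] /eqP z0].
by apply/eqP/row3_eq; rewrite coordE.
Qed.

Definition det3 u v w := xc u * (yc v * zc w - zc v * yc w)
  - yc u * (xc v * zc w - zc v * xc w) + zc u * (xc v * yc w - yc v * xc w).

Definition cross u v := row3 (yc u * zc v - zc u * yc v)
  (zc u * xc v - xc u * zc v) (xc u * yc v - yc u * xc v).

Lemma det3_cyc u v w : det3 u v w = det3 v w u.
Proof. by rewrite /det3; ring. Qed.

Lemma det3Z (a b c : R) u v w : det3 (a *: u) (b *: v) (c *: w) = a * b * c * det3 u v w.
Proof. by rewrite /det3 !coordE; ring. Qed.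

Lemma dotp_cross u v w : dotp (cross u v) w = det3 u v w.
Proof. by rewrite dotpE /cross /det3 !coordE; ring. Qed.

Lemma det3_cross3 u1 u2 u3 u4 :
  det3 (cross u1 u2) (cross u2 u3) (cross u3 u4) = det3 u1 u2 u3 * det3 u2 u3 u4.
Proof. by rewrite /det3 /cross !coordE; ring. Qed.

Lemma det3_relation u1 u2 u3 u4 :
  det3 u2 u3 u4 *: u1 + det3 u4 u1 u2 *: u3 = det3 u3 u4 u1 *: u2 + det3 u1 u2 u3 *: u4.
Proof. by apply: row3_eq; rewrite /det3 !coordE; ring. Qed.

Lemma cramer u v w (d : pt) :
  det3 u v w *: d
  = dotp d (cross v w) *: u + dotp d (cross w u) *: v + dotp d (cross u v) *: w.
Proof. by apply: row3_eq; rewrite /cross !dotpE /det3 !coordE; ring. Qed.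

Lemma cross_basis u v w n :
  det3 u v w *: n
  = dotp n u *: cross v w + dotp n v *: cross w u + dotp n w *: cross u v.
Proof. by apply: row3_eq; rewrite /cross !dotpE /det3 !coordE; ring. Qed.

Lemma cauchy_schwarz u v : dotp u v ^+ 2 <= dotp u u * dotp v v.
Proof.
rewrite -subr_ge0 (_ : _ - _ = dotp (cross u v) (cross u v)) ?dotp_ge0 //.
by rewrite /cross !dotpE !coordE; ring.
Qed.

Lemma cross0r v : cross v 0 = 0.
Proof. by apply: row3_eq; rewrite /cross !coordE; ring. Qed.

Lemma triple_cross v w : dotp v v *: w = dotp v w *: v - cross v (cross v w).
Proof. by apply: row3_eq; rewrite /cross !dotpE !coordE; ring. Qed.

Lemma dotp_cross_l (u v : pt) : dotp u (cross u v) = 0.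
Proof. by rewrite dotpE /cross !coordE; ring. Qed.

Lemma dotp_cross_r (u v : pt) : dotp v (cross u v) = 0.
Proof. by rewrite dotpE /cross !coordE; ring. Qed.

Lemma collinear3_dup P S : collinear3 P P S.
Proof.
have [-> | SP] := eqVneq S P.
  exists P, (row3 1 0 0); split; last by split; [|split]; exists 0; rewrite scale0r addr0.
  by apply/eqP => /coord_eq[]; rewrite !coordE => /eqP; rewrite oner_eq0.
exists P, (S - P); rewrite subr_eq0 SP; split=> //.
split; [|split]; [exists 0 | exists 0 | exists 1]; rewrite ?scale0r ?addr0 //.
by rewrite scale1r addrC subrK.
Qed.

Lemma collinear3P P Q S : collinear3 P Q S <-> cross (Q - P) (S - P) = 0.
Proof.
split.
  case=> a [d] [_ [[t1 ->] [[t2 ->] [t3 ->]]]].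
  by apply: row3_eq; rewrite /cross !coordE; ring.
move=> vw0; have [QP | v0] := eqVneq (Q - P) 0.
  by move/eqP: QP; rewrite subr_eq0 => /eqP->; apply: collinear3_dup.
exists P, (Q - P); split=> //; split; first by exists 0; rewrite scale0r addr0.
split; first by exists 1; rewrite scale1r addrC subrK.
exists (dotp (Q - P) (S - P) / dotp (Q - P) (Q - P)).
have vv0 : dotp (Q - P) (Q - P) != 0 by rewrite gt_eqF ?dotp_gt0.
have key : dotp (Q - P) (Q - P) *: (S - P) = dotp (Q - P) (S - P) *: (Q - P).
  by rewrite triple_cross vw0 cross0r subr0.
by rewrite mulrC -scalerA -key scalerA mulVf // scale1r addrC subrK.
Qed.

Lemma det3_subr O P Q S :
  det3 (P - O) (Q - O) (S - O) = dotp (cross (Q - P) (S - P)) (P - O).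
Proof. by rewrite dotp_cross /det3 !coordE; ring. Qed.

Lemma collinear3_det3 O P Q S : collinear3 P Q S -> det3 (P - O) (Q - O) (S - O) = 0.
Proof. by rewrite det3_subr => /collinear3P->; rewrite dotpE !coordE; ring. Qed.

Lemma det3_off_plane O P1 P2 P3 n c :
  ~ collinear3 P1 P2 P3 -> dotp n P1 = c -> dotp n P2 = c -> dotp n P3 = c ->
  dotp n O != c -> det3 (P1 - O) (P2 - O) (P3 - O) != 0.
Proof.
move=> ncol n1 n2 n3 nO; apply/eqP => D0; apply: ncol; apply/collinear3P.
have := cross_basis (P1 - O) (P2 - P1) (P3 - P1) n.
rewrite (_ : det3 _ _ _ = det3 (P1 - O) (P2 - O) (P3 - O)); last first.
  by rewrite /det3 !coordE; ring.
rewrite D0 scale0r !dotpBr n1 n2 n3 subrr !scale0r !addr0 => /esym/eqP.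
by rewrite scaler_eq0 subr_eq0 eq_sym (negbTE nO) => /eqP.
Qed.

Definition xy_lift u := row3 (xc u) (yc u) 1.
(* Twice the signed area of the projection of the triangle u v w to the xy-plane. *)
Definition xy_det u v w := det3 (xy_lift u) (xy_lift v) (xy_lift w).

Lemma xy_detE P Q S : xy_det P Q S = zc (cross (Q - P) (S - P)).
Proof. by rewrite /xy_det /xy_lift /det3 /cross !coordE; ring. Qed.

Lemma collinear3_xy_det P Q S : collinear3 P Q S -> xy_det P Q S = 0.
Proof. by rewrite xy_detE => /collinear3P->; apply: zc0. Qed.

Definition diagonals_cross u1 u2 u3 u4 := exists s t : R,
  0 < s < 1 /\ 0 < t < 1 /\ u1 + s *: (u3 - u1) = u2 + t *: (u4 - u2).

Definition cyc_oriented k u1 u2 u3 u4 :=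
  [/\ 0 < k * det3 u1 u2 u3, 0 < k * det3 u2 u3 u4,
      0 < k * det3 u3 u4 u1 & 0 < k * det3 u4 u1 u2].

Lemma diagonals_cross_oriented u1 u2 u3 u4 :
  diagonals_cross u1 u2 u3 u4 -> det3 u1 u2 u3 != 0 ->
  cyc_oriented (det3 u1 u2 u3) u1 u2 u3 u4.
Proof.
case=> s [t] [/andP[s0 s1] [/andP[t0 t1] /coord_eq[]]]; rewrite !coordE => ex ey ez D0.
have tn : t != 0 by rewrite gt_eqF.
have e4x : xc u4 = (xc u1 + s * (xc u3 - xc u1) - xc u2 + t * xc u2) / t.
  by rewrite ex; field.
have e4y : yc u4 = (yc u1 + s * (yc u3 - yc u1) - yc u2 + t * yc u2) / t.
  by rewrite ey; field.
have e4z : zc u4 = (zc u1 + s * (zc u3 - zc u1) - zc u2 + t * zc u2) / t.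
  by rewrite ez; field.
have DD : 0 < det3 u1 u2 u3 * det3 u1 u2 u3 by rewrite -expr2 exprn_even_gt0.
rewrite /cyc_oriented; set D := det3 u1 u2 u3 in D0 DD *.
have [-> -> ->] : [/\ D * det3 u2 u3 u4 = D * D * (1 - s) / t,
    D * det3 u3 u4 u1 = D * D * (1 - t) / t & D * det3 u4 u1 u2 = D * D * s / t].
  by split; rewrite /D /det3 e4x e4y e4z; field.
by split=> //; apply: divr_gt0 => //; apply: mulr_gt0 => //; rewrite subr_gt0.
Qed.

Lemma affine_comb (a b : R) u v :
  a + b != 0 -> u + (b / (a + b)) *: (v - u) = (a + b)^-1 *: (a *: u + b *: v).
Proof. by move=> ab0; apply: row3_eq; rewrite !coordE; field. Qed.

Lemma oriented_diagonals_cross k h u1 u2 u3 u4 :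
  cyc_oriented k u1 u2 u3 u4 ->
  dotp h u1 = 1 -> dotp h u2 = 1 -> dotp h u3 = 1 -> dotp h u4 = 1 ->
  diagonals_cross u1 u2 u3 u4.
Proof.
(* The linear dependence [det3_relation] of four vectors becomes an affine one on the
   plane [dotp h _ = 1]; cyclic orientation gives its coefficients the signs of two
   crossing segments. *)
case=> k1 k2 k3 k4 h1 h2 h3 h4; have rel := det3_relation u1 u2 u3 u4.
have sum : det3 u2 u3 u4 + det3 u4 u1 u2 = det3 u3 u4 u1 + det3 u1 u2 u3.
  by move/(congr1 (dotp h)): rel; rewrite !dotpDr !dotpZr h1 h2 h3 h4 !mulr1.
have nz : det3 u2 u3 u4 + det3 u4 u1 u2 != 0.
  by apply: contraTneq (addr_gt0 k2 k4) => e; rewrite -mulrDr e mulr0 ltxx.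
have nz' : det3 u3 u4 u1 + det3 u1 u2 u3 != 0 by rewrite -sum.
exists (det3 u4 u1 u2 / (det3 u2 u3 u4 + det3 u4 u1 u2)).
exists (det3 u1 u2 u3 / (det3 u3 u4 u1 + det3 u1 u2 u3)).
split; first exact: ratio_in_01 k2 k4.
split; first exact: ratio_in_01 k3 k1.
by rewrite (affine_comb _ _ nz) (affine_comb _ _ nz') rel sum.
Qed.

Lemma diagonals_crossB O P1 P2 P3 P4 :
  diagonals_cross (P1 - O) (P2 - O) (P3 - O) (P4 - O) <-> diagonals_cross P1 P2 P3 P4.
Proof.
have E (P Q : pt) s : P - O + s *: (Q - O - (P - O)) = P + s *: (Q - P) - O.
  by rewrite opprB addrA subrK addrAC.
split=> -[s [t [s01 [t01 e]]]]; exists s, t; do 2 split=> //; move: e; rewrite !E.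
  exact: addIr.
by move->.
Qed.

Lemma diagonals_cross_plane n c A B C D : diagonals_cross A B C D ->
  dotp n A = c -> dotp n B = c -> dotp n C = c -> dotp n D = c.
Proof.
case=> s [t] [_ [/andP[t0 _] /(congr1 (dotp n))]].
rewrite !dotpDr !dotpZr !dotpBr => e nA nB nC; rewrite nA nB nC subrr mulr0 addr0 in e.
have /eqP : t * (dotp n D - c) = 0 by lra.
by rewrite mulf_eq0 (gt_eqF t0) subr_eq0 => /eqP.
Qed.

Lemma quad_coplanar A B C D : diagonals_cross A B C D ->
  forall X, X \in [:: A; B; C; D] ->
  dotp (cross (B - A) (C - A)) X = dotp (cross (B - A) (C - A)) A.
Proof.
move=> quad; set n := cross _ _.
have [nB nC] : dotp n B = dotp n A /\ dotp n C = dotp n A.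
  by split; apply/eqP; rewrite -subr_eq0 -dotpBr dotp_cross /det3 !coordE; apply/eqP; ring.
have nD := diagonals_cross_plane quad erefl nB nC.
by move=> X; rewrite !inE => /or4P[]/eqP->.
Qed.

Lemma diagonals_cross_xy_lift A B C D : diagonals_cross A B C D ->
  diagonals_cross (xy_lift A) (xy_lift B) (xy_lift C) (xy_lift D).
Proof.
case=> s [t] [s01 [t01 /coord_eq[]]]; rewrite !coordE => ex ey _.
by exists s, t; do 2 split=> //; apply: row3_eq; rewrite /xy_lift !coordE //; ring.
Qed.

Lemma diagonals_cross_of_xy_lift O A B C D :
  dual_plane A O -> dual_plane B O -> dual_plane C O -> dual_plane D O ->
  diagonals_cross (xy_lift A) (xy_lift B) (xy_lift C) (xy_lift D) ->
  diagonals_cross A B C D.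
Proof.
rewrite /dual_plane => oA oB oC oD [s [t [s01 [t01 /coord_eq[]]]]].
rewrite /xy_lift !coordE => ex ey _; exists s, t; do 2 split=> //.
apply: row3_eq; rewrite !coordE //.
have zA : zc A = xc A * xc O + yc A * yc O - zc O by lra.
have zB : zc B = xc B * xc O + yc B * yc O - zc O by lra.
have zC : zc C = xc C * xc O + yc C * yc O - zc O by lra.
have zD : zc D = xc D * xc O + yc D * yc O - zc O by lra.
transitivity (xc O * (xc A + s * (xc C - xc A)) + yc O * (yc A + s * (yc C - yc A)) - zc O).
  by rewrite zA zC; ring.
by rewrite ex ey zB zD; ring.
Qed.

Lemma cyc_oriented_scale k (a1 a2 a3 a4 : R) w1 w2 w3 w4 :
  0 < k * a1 -> 0 < k * a2 -> 0 < k * a3 -> 0 < k * a4 ->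
  cyc_oriented 1 w1 w2 w3 w4 ->
  cyc_oriented k (a1^-1 *: w1) (a2^-1 *: w2) (a3^-1 *: w3) (a4^-1 *: w4).
Proof.
have scaled (a b c : R) u v w : 0 < k * a -> 0 < k * b -> 0 < k * c ->
    0 < 1 * det3 u v w -> 0 < k * det3 (a^-1 *: u) (b^-1 *: v) (c^-1 *: w).
  move=> ka kb kc; rewrite mul1r => uvw; apply: (sign_of_prod3 ka kb kc).
  have nz (x : R) : 0 < k * x -> x != 0.
    by apply: contraTneq => ->; rewrite mulr0 ltxx.
  rewrite det3Z (_ : a^-1 * b^-1 * c^-1 * det3 u v w * (a * b * c) = det3 u v w) //.
  by field; rewrite !nz.
by move=> k1 k2 k3 k4 [w123 w234 w341 w412]; split; apply: scaled.
Qed.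

Definition dual_normal X := row3 (xc X) (yc X) (-1).

Lemma dual_planeE X Y : dual_plane X Y <-> dotp (dual_normal X) Y = zc X.
Proof. by rewrite /dual_plane dotpE /dual_normal !coordE; split=> e; lra. Qed.

Lemma dual_plane_dir X O P :
  dual_plane X O -> dual_plane X P -> dotp (dual_normal X) (P - O) = 0.
Proof. by move=> /dual_planeE eO /dual_planeE eP; rewrite dotpBr eO eP subrr. Qed.

Lemma dual_plane_flat_angle X O P Q : subset3 (flat_angle O P Q) (dual_plane X) ->
  [/\ dual_plane X O, dual_plane X P & dual_plane X Q].
Proof.
have segP : segment P Q P by exists 0; rewrite lexx ler01 scale0r addr0.
have segQ : segment P Q Q by exists 1; rewrite lexx ler01 scale1r addrC subrK.
move=> sub; split; apply: sub.
- by exists 0, P; rewrite lexx scale0r addr0.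
- by exists 1, P; rewrite ler01 scale1r addrC subrK.
- by exists 1, Q; rewrite ler01 scale1r addrC subrK.
Qed.

Lemma flat_angle_in_dual X O P Q : dual_plane X O ->
  dotp (dual_normal X) (P - O) = 0 -> dotp (dual_normal X) (Q - O) = 0 ->
  subset3 (flat_angle O P Q) (dual_plane X).
Proof.
move=> /dual_planeE eO eP eQ Y [t [Z [_ [[u [_ ->]] ->]]]]; apply/dual_planeE.
rewrite (_ : P + u *: (Q - P) - O = (1 - u) *: (P - O) + u *: (Q - O)).
  by rewrite dotpDr !dotpZr dotpDr !dotpZr eO eP eQ !mulr0 addr0 mulr0 addr0.
by apply: row3_eq; rewrite !coordE; ring.
Qed.

Lemma det3_dual_normal A B C :
  det3 (dual_normal A) (dual_normal B) (dual_normal C) = - xy_det A B C.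
Proof. by rewrite /dual_normal /xy_det /xy_lift /det3 !coordE; ring. Qed.

Lemma cross_dual_dir X u v : dotp (dual_normal X) u = 0 -> dotp (dual_normal X) v = 0 ->
  cross u v = - zc (cross u v) *: dual_normal X.
Proof.
rewrite !dotpE /dual_normal !coordE => eu ev.
have zu : zc u = xc X * xc u + yc X * yc u by lra.
have zv : zc v = xc X * xc v + yc X * yc v by lra.
by apply: row3_eq; rewrite /cross !coordE ?zu ?zv; ring.
Qed.

Lemma xy_det_edges A B C u1 u2 u3 u4 :
  dotp (dual_normal A) u1 = 0 -> dotp (dual_normal A) u2 = 0 ->
  dotp (dual_normal B) u2 = 0 -> dotp (dual_normal B) u3 = 0 ->
  dotp (dual_normal C) u3 = 0 -> dotp (dual_normal C) u4 = 0 ->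
  xy_det A B C * (zc (cross u1 u2) * zc (cross u2 u3) * zc (cross u3 u4))
  = det3 u1 u2 u3 * det3 u2 u3 u4.
Proof.
move=> a1 a2 b2 b3 c3 c4; rewrite -det3_cross3.
rewrite [in X in _ = X](cross_dual_dir a1 a2) [in X in _ = X](cross_dual_dir b2 b3).
by rewrite [in X in _ = X](cross_dual_dir c3 c4) det3Z det3_dual_normal; ring.
Qed.

Lemma hedral_angle_rot O P1 P2 P3 P4 X :
  hedral_angle O P1 P2 P3 P4 X -> hedral_angle O P2 P3 P4 P1 X.
Proof.
case=> t [Z [t0 [[l1 [l2 [l3 [l4 [g1 [g2 [g3 [g4 [sum eZ]]]]]]]]] eX]]].
exists t, Z; do 2 split=> //; exists l2, l3, l4, l1; do 4 split=> //.
by split; [lra | rewrite eZ -!addrA addrC !addrA].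
Qed.

Lemma interior_hedral_angle_rot O P1 P2 P3 P4 Y :
  interior3 (hedral_angle O P1 P2 P3 P4) Y -> interior3 (hedral_angle O P2 P3 P4 P1) Y.
Proof. by case=> e [e0 near]; exists e; split=> // Z /near/hedral_angle_rot. Qed.

Lemma hedral_angle_dotp_ge0 O P1 P2 P3 P4 f Z :
  0 <= dotp f (P1 - O) -> 0 <= dotp f (P2 - O) ->
  0 <= dotp f (P3 - O) -> 0 <= dotp f (P4 - O) ->
  hedral_angle O P1 P2 P3 P4 Z -> 0 <= dotp f (Z - O).
Proof.
move=> f1 f2 f3 f4 [t [X [t0 [[l1 [l2 [l3 [l4 [g1 [g2 [g3 [g4 [sum ->]]]]]]]]]] ->]]].
rewrite (_ : dotp _ _ = t * (l1 * dotp f (P1 - O) + l2 * dotp f (P2 - O)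
    + l3 * dotp f (P3 - O) + l4 * dotp f (P4 - O))).
  by rewrite mulr_ge0 // !addr_ge0 // mulr_ge0.
have -> : l4 = 1 - l1 - l2 - l3 by lra.
by rewrite !dotpE !coordE; ring.
Qed.

Lemma interior_dotp_gt0 O P1 P2 P3 P4 Y f v :
  interior3 (hedral_angle O P1 P2 P3 P4) Y ->
  0 <= dotp f (P1 - O) -> 0 <= dotp f (P2 - O) ->
  0 <= dotp f (P3 - O) -> 0 <= dotp f (P4 - O) ->
  0 < dotp f v -> 0 < dotp f (Y - O).
Proof.
case=> e [e0 near] f1 f2 f3 f4 fv; have vv := dotp_ge0 v.
pose eta := e / (e + dotp v v + 1).
have eta0 : 0 < eta by apply: divr_gt0; lra.
have eta1 : eta < 1 by rewrite ltr_pdivrMr; lra.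
have etav : eta * dotp v v < e by rewrite mulrAC ltr_pdivrMr; nra.
have etav0 : 0 <= eta * dotp v v by rewrite mulr_ge0 // ltW.
have etaf : 0 < eta * dotp f v by rewrite mulr_gt0.
have : hedral_angle O P1 P2 P3 P4 (Y - eta *: v).
  apply: near; rewrite (_ : dotp _ _ = eta * eta * dotp v v); first by nra.
  by rewrite !dotpE !coordE; ring.
move/(hedral_angle_dotp_ge0 f1 f2 f3 f4).
rewrite (_ : dotp _ _ = dotp f (Y - O) - eta * dotp f v).
  by lra.
by rewrite !dotpE !coordE; ring.
Qed.

Lemma interior_edge_sign O P1 P2 P3 P4 Y k :
  interior3 (hedral_angle O P1 P2 P3 P4) Y -> xc Y = xc O -> yc Y = yc O ->
  0 < k * det3 (P1 - O) (P2 - O) (P3 - O) -> 0 < k * det3 (P4 - O) (P1 - O) (P2 - O) ->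
  0 < k * (zc Y - zc O) * zc (cross (P1 - O) (P2 - O)).
Proof.
move=> int Yx Yy k3; rewrite det3_cyc => k4.
set f := k *: cross (P1 - O) (P2 - O).
have fE v : dotp f v = k * det3 (P1 - O) (P2 - O) v by rewrite dotpZl dotp_cross.
have -> : k * (zc Y - zc O) * zc (cross (P1 - O) (P2 - O)) = dotp f (Y - O).
  by rewrite fE /det3 /cross !coordE Yx Yy; ring.
have f1 : dotp f (P1 - O) = 0 by rewrite fE /det3; ring.
have f2 : dotp f (P2 - O) = 0 by rewrite fE /det3; ring.
apply: (interior_dotp_gt0 (v := P3 - O) int); rewrite ?f1 ?f2 ?lexx ?fE //.
  exact: ltW.
exact: ltW.
Qed.

Lemma hedral_angle_pos_comb O P1 P2 P3 P4 (c1 c2 c3 c4 : R) :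
  0 < c1 -> 0 < c2 -> 0 < c3 -> 0 < c4 ->
  hedral_angle O P1 P2 P3 P4
    (O + c1 *: (P1 - O) + c2 *: (P2 - O) + c3 *: (P3 - O) + c4 *: (P4 - O)).
Proof.
move=> c1p c2p c3p c4p; have T0 : 0 < c1 + c2 + c3 + c4 by rewrite !addr_gt0.
have Tn : c1 + c2 + c3 + c4 != 0 by rewrite gt_eqF.
exists (c1 + c2 + c3 + c4).
exists (c1 / (c1 + c2 + c3 + c4) *: P1 + c2 / (c1 + c2 + c3 + c4) *: P2
  + c3 / (c1 + c2 + c3 + c4) *: P3 + c4 / (c1 + c2 + c3 + c4) *: P4).
split; first exact: ltW.
split; last by apply: row3_eq; rewrite !coordE; field.
exists (c1 / (c1 + c2 + c3 + c4)), (c2 / (c1 + c2 + c3 + c4)).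
exists (c3 / (c1 + c2 + c3 + c4)), (c4 / (c1 + c2 + c3 + c4)).
do 4 (split; first by rewrite divr_ge0 ?ltW).
by split=> //; field.
Qed.

Lemma perturbed_coef_gt0 (c D : R) w : 0 < c -> D != 0 ->
  exists2 e : R, 0 < e & forall v, dotp v v < e -> 0 < c + dotp v w / D.
Proof.
move=> c0 D0; have ww := dotp_ge0 w.
have DD : 0 < D ^+ 2 by rewrite exprn_even_gt0.
exists (c ^+ 2 * D ^+ 2 / (dotp w w + 1)).
  by apply: divr_gt0; [apply: mulr_gt0 => //; exact: exprn_gt0 | lra].
move=> v vv; have vv0 := dotp_ge0 v; have cs := cauchy_schwarz v w.
have vw : dotp v v * (dotp w w + 1) < c ^+ 2 * D ^+ 2 by rewrite -ltr_pdivlMr //; lra.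
have : (dotp v w / D) ^+ 2 < c ^+ 2 by rewrite expr_div_n ltr_pdivrMr //; lra.
rewrite !expr2; nra.
Qed.

Lemma interior_hedral_angle_pos_comb O P1 P2 P3 P4 (c1 c2 c3 c4 : R) :
  0 < c1 -> 0 < c2 -> 0 < c3 -> 0 < c4 ->
  det3 (P1 - O) (P2 - O) (P3 - O) != 0 ->
  interior3 (hedral_angle O P1 P2 P3 P4)
    (O + c1 *: (P1 - O) + c2 *: (P2 - O) + c3 *: (P3 - O) + c4 *: (P4 - O)).
Proof.
move=> c1p c2p c3p c4p D0.
set u1 := P1 - O; set u2 := P2 - O; set u3 := P3 - O; set D := det3 u1 u2 u3 in D0.
have [e1 e1p near1] := perturbed_coef_gt0 (cross u2 u3) c1p D0.
have [e2 e2p near2] := perturbed_coef_gt0 (cross u3 u1) c2p D0.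
have [e3 e3p near3] := perturbed_coef_gt0 (cross u1 u2) c3p D0.
exists (Num.min e1 (Num.min e2 e3)); split; first by rewrite !lt_min e1p e2p e3p.
set Y0 := O + _ + _ + _ + _ => Y; rewrite !lt_min => /and3P[/near1 n1 /near2 n2 /near3 n3].
have [x1 [x2 [x3 [decomp [b1 b2 b3]]]]] : exists x1 x2 x3 : R,
    Y - Y0 = x1 *: u1 + x2 *: u2 + x3 *: u3 /\ [/\ 0 < c1 + x1, 0 < c2 + x2 & 0 < c3 + x3].
  exists (dotp (Y - Y0) (cross u2 u3) / D), (dotp (Y - Y0) (cross u3 u1) / D).
  exists (dotp (Y - Y0) (cross u1 u2) / D); split=> //.
  by apply: (scalerI D0); rewrite cramer !scalerDr !scalerA !(mulrC D) !divfK.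
rewrite -[Y](subrK Y0) decomp (_ : _ + Y0 = O + (c1 + x1) *: u1 + (c2 + x2) *: u2
    + (c3 + x3) *: u3 + c4 *: (P4 - O)); first exact: hedral_angle_pos_comb.
by apply: row3_eq; rewrite /Y0 !coordE; ring.
Qed.

Lemma isotropic_xy_det0 A B C D : in_isotropic_plane A B C D -> xy_det A B C = 0.
Proof.
case=> a [b [c [ab onP]]].
have lift X : X \in [:: A; B; C; D] -> dotp (row3 a b (- c)) (xy_lift X) = 0.
  by move/onP => e; rewrite dotpE /xy_lift !coordE -e; ring.
have := cross_basis (xy_lift A) (xy_lift B) (xy_lift C) (row3 a b (- c)).
rewrite !lift ?inE ?eqxx ?orbT // !scale0r !addr0 => /eqP.
rewrite scaler_eq0 => /orP[/eqP // | /eqP/coord_eq[]].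
by rewrite !coordE; case: ab => /eqP.
Qed.

Lemma quad_xy_det_neq0 A B C D :
  convex_quad A B C D -> ~ in_isotropic_plane A B C D -> xy_det A B C != 0.
Proof.
case=> ncol quad niso; apply/eqP => N0.
have n0 : cross (B - A) (C - A) != 0 by apply/eqP => /collinear3P.
have zn : zc (cross (B - A) (C - A)) = 0 by rewrite -xy_detE.
apply: niso; exists (xc (cross (B - A) (C - A))), (yc (cross (B - A) (C - A))).
exists (dotp (cross (B - A) (C - A)) A); split.
  have [x0 | ] := eqVneq (xc (cross (B - A) (C - A))) 0; [right | by left].
  by apply: contra_neq n0 => y0; apply: row3_eq; rewrite ?xc0 ?yc0 ?zc0.
by move=> X /(quad_coplanar quad) <-; rewrite dotpE zn mul0r addr0.
Qed.

Lemma dual_point_of_plane n c X : zc n != 0 -> dotp n X = c ->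
  dual_plane X (row3 (- xc n / zc n) (- yc n / zc n) (- c / zc n)).
Proof. by move=> n0; rewrite /dual_plane dotpE !coordE => <-; field. Qed.

Section DualAngle.
Variables (A B C D O : pt) (N : R).
Hypothesis oriented : cyc_oriented N (xy_lift A) (xy_lift B) (xy_lift C) (xy_lift D).
Hypotheses (OA : dual_plane A O) (OB : dual_plane B O).
Hypotheses (OC : dual_plane C O) (OD : dual_plane D O).

Let w1 := cross (dual_normal D) (dual_normal A).
Let w2 := cross (dual_normal A) (dual_normal B).
Let w3 := cross (dual_normal B) (dual_normal C).
Let w4 := cross (dual_normal C) (dual_normal D).
Let h := dual_normal A + dual_normal B + dual_normal C + dual_normal D.
(* The edge directions w_i are rescaled onto the plane [dotp h _ = 1]; all the scale
   factors have the sign of [- N], so the rescaled edges stay cyclically oriented. *)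
Let P1 := O + (dotp h w1)^-1 *: w1.
Let P2 := O + (dotp h w2)^-1 *: w2.
Let P3 := O + (dotp h w3)^-1 *: w3.
Let P4 := O + (dotp h w4)^-1 *: w4.

Lemma dotp_normal_sum_edges :
  [/\ dotp h w1 = - (xy_det D A B + xy_det C D A),
      dotp h w2 = - (xy_det A B C + xy_det D A B),
      dotp h w3 = - (xy_det B C D + xy_det A B C) &
      dotp h w4 = - (xy_det C D A + xy_det B C D)].
Proof.
rewrite /h /w1 /w2 /w3 /w4 /dual_normal /xy_det /xy_lift /cross /det3.
by split; rewrite dotpE !coordE; ring.
Qed.

Lemma sum_edges : w1 + w2 + w3 + w4 = row3 0 0 (xy_det A B C + xy_det C D A).
Proof.
rewrite /w1 /w2 /w3 /w4 /dual_normal /xy_det /xy_lift /cross /det3.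
by apply: row3_eq; rewrite !coordE; ring.
Qed.

Lemma edge_scales_sign :
  [/\ 0 < - N * dotp h w1, 0 < - N * dotp h w2, 0 < - N * dotp h w3 & 0 < - N * dotp h w4].
Proof.
have pos x y : 0 < N * x -> 0 < N * y -> 0 < - N * - (x + y).
  by rewrite mulrNN mulrDr; apply: addr_gt0.
case: oriented => oA oB oC oD.
by have [-> -> -> ->] := dotp_normal_sum_edges; split; apply: pos.
Qed.

Lemma edge_dirs_oriented : cyc_oriented 1 w1 w2 w3 w4.
Proof.
case: oriented => oA oB oC oD.
rewrite /cyc_oriented !mul1r /w1 /w2 /w3 /w4 !det3_cross3 !det3_dual_normal !mulrNN.
by split; apply: mul_same_sign_gt0 N _ _ _ _.
Qed.

Lemma edge_vectors : [/\ P1 - O = (dotp h w1)^-1 *: w1, P2 - O = (dotp h w2)^-1 *: w2,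
  P3 - O = (dotp h w3)^-1 *: w3 & P4 - O = (dotp h w4)^-1 *: w4].
Proof. by split; rewrite addrC addKr. Qed.

Lemma edges_oriented : cyc_oriented (- N) (P1 - O) (P2 - O) (P3 - O) (P4 - O).
Proof.
have [s1 s2 s3 s4] := edge_scales_sign.
have [-> -> -> ->] := edge_vectors.
exact: cyc_oriented_scale s1 s2 s3 s4 edge_dirs_oriented.
Qed.

Lemma edges_on_plane :
  [/\ dotp h (P1 - O) = 1, dotp h (P2 - O) = 1, dotp h (P3 - O) = 1 & dotp h (P4 - O) = 1].
Proof.
have [s1 s2 s3 s4] := edge_scales_sign.
have nz x : 0 < - N * x -> x != 0 by apply: contraTneq => ->; rewrite mulr0 ltxx.
by have [-> -> -> ->] := edge_vectors; rewrite !dotpZr !mulVf ?nz.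
Qed.

Lemma dual_angle_of_dual_point :
  exists O P1 P2 P3 P4 : pt,
      is_convex_4hedral O P1 P2 P3 P4 /\ admissible O P1 P2 P3 P4 /\
      subset3 (flat_angle O P1 P2) (dual_plane A) /\
      subset3 (flat_angle O P2 P3) (dual_plane B) /\
      subset3 (flat_angle O P3 P4) (dual_plane C) /\
      subset3 (flat_angle O P4 P1) (dual_plane D).
Proof.
have [s1 s2 s3 s4] := edge_scales_sign.
have [e1 e2 e3 e4] := edges_on_plane.
have [o1 o2 o3 o4] := edges_oriented.
have [E1 E2 E3 E4] := edge_vectors.
have nz x : 0 < - N * x -> x != 0 by apply: contraTneq => ->; rewrite mulr0 ltxx.
have perp_l (u v P : pt) k : P - O = k *: cross u v -> dotp u (P - O) = 0.
  by move->; rewrite dotpZr dotp_cross_l mulr0.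
have perp_r (u v P : pt) k : P - O = k *: cross u v -> dotp v (P - O) = 0.
  by move->; rewrite dotpZr dotp_cross_r mulr0.
exists O, P1, P2, P3, P4; split; [split; [split|] | split; [|split; [|split; [|split]]]].
- by move/(collinear3_det3 O) => D0; move: o1; rewrite D0 mulr0 ltxx.
- apply/(diagonals_crossB O); exact: oriented_diagonals_cross edges_oriented e1 e2 e3 e4.
- exists h, (dotp h O + 1); split.
    by apply/eqP => /coord_eq[_ _]; rewrite /h /dual_normal !coordE; lra.
  have on (P : pt) : dotp h (P - O) = 1 -> dotp h P = dotp h O + 1.
    by rewrite dotpBr; lra.
  by rewrite (on _ e1) (on _ e2) (on _ e3) (on _ e4); do 4 split=> //; apply/eqP; lra.
- exists (O + (- N) *: (w1 + w2 + w3 + w4)); split; [|split].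
  + by rewrite sum_edges !coordE mulr0 addr0.
  + by rewrite sum_edges !coordE mulr0 addr0.
  rewrite (_ : O + _ = O + (- N * dotp h w1) *: (P1 - O) + (- N * dotp h w2) *: (P2 - O)
      + (- N * dotp h w3) *: (P3 - O) + (- N * dotp h w4) *: (P4 - O)).
    apply: interior_hedral_angle_pos_comb => //.
    by apply: contraTneq o1 => ->; rewrite mulr0 ltxx.
  by rewrite E1 E2 E3 E4 !scalerA !mulfK ?nz // !scalerDr !addrA.
- exact: flat_angle_in_dual OA (perp_r _ _ _ _ E1) (perp_l _ _ _ _ E2).
- exact: flat_angle_in_dual OB (perp_r _ _ _ _ E2) (perp_l _ _ _ _ E3).
- exact: flat_angle_in_dual OC (perp_r _ _ _ _ E3) (perp_l _ _ _ _ E4).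
- exact: flat_angle_in_dual OD (perp_r _ _ _ _ E4) (perp_l _ _ _ _ E1).
Qed.

End DualAngle.

Lemma dual_angle_of_quad (A B C D : pt) :
  convex_quad A B C D -> ~ in_isotropic_plane A B C D ->
  exists O P1 P2 P3 P4 : pt,
      is_convex_4hedral O P1 P2 P3 P4 /\ admissible O P1 P2 P3 P4 /\
      subset3 (flat_angle O P1 P2) (dual_plane A) /\
      subset3 (flat_angle O P2 P3) (dual_plane B) /\
      subset3 (flat_angle O P3 P4) (dual_plane C) /\
      subset3 (flat_angle O P4 P1) (dual_plane D).
Proof.
move=> quad niso; have N0 := quad_xy_det_neq0 quad niso; case: quad => _ cross_ABCD.
have oriented := diagonals_cross_oriented (diagonals_cross_xy_lift cross_ABCD) N0.
set n := cross (B - A) (C - A); have zn : zc n != 0 by rewrite -xy_detE.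
pose O := row3 (- xc n / zc n) (- yc n / zc n) (- dotp n A / zc n).
have dual X : X \in [:: A; B; C; D] -> dual_plane X O.
  by move/(quad_coplanar cross_ABCD)/(dual_point_of_plane zn).
by apply: (dual_angle_of_dual_point oriented); apply: dual; rewrite !inE eqxx ?orbT.
Qed.

Lemma xy_lift_oriented_of_dual_angle (A B C D O P1 P2 P3 P4 : pt) :
  is_convex_4hedral O P1 P2 P3 P4 -> admissible O P1 P2 P3 P4 ->
  subset3 (flat_angle O P1 P2) (dual_plane A) ->
  subset3 (flat_angle O P2 P3) (dual_plane B) ->
  subset3 (flat_angle O P3 P4) (dual_plane C) ->
  subset3 (flat_angle O P4 P1) (dual_plane D) ->
  exists r, cyc_oriented r (xy_lift A) (xy_lift B) (xy_lift C) (xy_lift D).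
Proof.
case=> [[ncol cross_P] [n [c [_ [n1 [n2 [n3 [n4 nO]]]]]]]] [Y [Yx [Yy int]]].
move=> /dual_plane_flat_angle[OA A1 A2] /dual_plane_flat_angle[OB B2 B3].
move=> /dual_plane_flat_angle[OC C3 C4] /dual_plane_flat_angle[OD D4 D1].
have D0 := det3_off_plane ncol n1 n2 n3 nO.
have [q1 q2 q3 q4] := diagonals_cross_oriented ((diagonals_crossB O _ _ _ _).2 cross_P) D0.
(* Admissibility: with u_i := P_i - O, the z-component of u_i x u_(i+1) has the sign of
   det3 u1 u2 u3 * (zc Y - zc O) for every edge. *)
have int2 := interior_hedral_angle_rot int; have int3 := interior_hedral_angle_rot int2.
have e12 := interior_edge_sign int Yx Yy q1 q4.
have e23 := interior_edge_sign int2 Yx Yy q2 q1.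
have e34 := interior_edge_sign int3 Yx Yy q3 q2.
have e41 := interior_edge_sign (interior_hedral_angle_rot int3) Yx Yy q4 q3.
exists (det3 (P1 - O) (P2 - O) (P3 - O) * (zc Y - zc O)).
have dA1 := dual_plane_dir OA A1; have dA2 := dual_plane_dir OA A2.
have dB2 := dual_plane_dir OB B2; have dB3 := dual_plane_dir OB B3.
have dC3 := dual_plane_dir OC C3; have dC4 := dual_plane_dir OC C4.
have dD4 := dual_plane_dir OD D4; have dD1 := dual_plane_dir OD D1.
split; rewrite -/(xy_det _ _ _).
- apply: (sign_of_prod3 e12 e23 e34); rewrite (xy_det_edges dA1 dA2 dB2 dB3 dC3 dC4).
  exact: mul_same_sign_gt0 q1 q2.
- apply: (sign_of_prod3 e23 e34 e41); rewrite (xy_det_edges dB2 dB3 dC3 dC4 dD4 dD1).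
  exact: mul_same_sign_gt0 q2 q3.
- apply: (sign_of_prod3 e34 e41 e12); rewrite (xy_det_edges dC3 dC4 dD4 dD1 dA1 dA2).
  exact: mul_same_sign_gt0 q3 q4.
- apply: (sign_of_prod3 e41 e12 e23); rewrite (xy_det_edges dD4 dD1 dA1 dA2 dB2 dB3).
  exact: mul_same_sign_gt0 q4 q1.
Qed.

Lemma quad_of_dual_angle (A B C D O P1 P2 P3 P4 : pt) :
  is_convex_4hedral O P1 P2 P3 P4 -> admissible O P1 P2 P3 P4 ->
  subset3 (flat_angle O P1 P2) (dual_plane A) ->
  subset3 (flat_angle O P2 P3) (dual_plane B) ->
  subset3 (flat_angle O P3 P4) (dual_plane C) ->
  subset3 (flat_angle O P4 P1) (dual_plane D) ->
  convex_quad A B C D /\ ~ in_isotropic_plane A B C D.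
Proof.
move=> angle adm fA fB fC fD.
have [r oriented] := xy_lift_oriented_of_dual_angle angle adm fA fB fC fD.
have [[OA _ _] [OB _ _]] := (dual_plane_flat_angle fA, dual_plane_flat_angle fB).
have [[OC _ _] [OD _ _]] := (dual_plane_flat_angle fC, dual_plane_flat_angle fD).
have lift1 (X : pt) : dotp (row3 0 0 (1 : R)) (xy_lift X) = 1.
  by rewrite dotpE /xy_lift !coordE; ring.
have := oriented_diagonals_cross oriented (lift1 A) (lift1 B) (lift1 C) (lift1 D).
move/(diagonals_cross_of_xy_lift OA OB OC OD) => cross_ABCD.
have N0 : xy_det A B C != 0.
  case: oriented => rABC _ _ _; apply: contraTneq rABC.
  by rewrite /xy_det => ->; rewrite mulr0 ltxx.
split; first by split=> //; move/collinear3_xy_det; apply/eqP.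
by move/isotropic_xy_det0; apply/eqP.
Qed.

End Space.

Theorem lemma1 (R : realType) (A B C D : 'rV[R]_3) :
  (convex_quad A B C D /\ ~ in_isotropic_plane A B C D) <->
  (exists O P1 P2 P3 P4 : 'rV[R]_3,
      is_convex_4hedral O P1 P2 P3 P4 /\ admissible O P1 P2 P3 P4 /\
      subset3 (flat_angle O P1 P2) (dual_plane A) /\
      subset3 (flat_angle O P2 P3) (dual_plane B) /\
      subset3 (flat_angle O P3 P4) (dual_plane C) /\
      subset3 (flat_angle O P4 P1) (dual_plane D)).
Proof.
split; first by case; exact: dual_angle_of_quad.
by case=> O [P1 [P2 [P3 [P4 [angle [adm [fA [fB [fC fD]]]]]]]]];
  exact: quad_of_dual_angle adm fA fB fC fD.
Qed.
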